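(* Up to isomorphism there is exactly one two-dimensional evolution algebra $A$ over a field $\mathbb{K}$ such that $A^3\neq0$, $(A^2)^2\neq0$ and the annihilator $\mathrm{Ann}(A)=\{a\in A: aA=0\}$ is nonzero. Its square is $\mathfrak{D}_7\cup\mathfrak{D}_9$.
   Context: An evolution algebra over $\mathbb{K}$ is a $\mathbb{K}$-algebra with a basis $\{e_i\}$ (natural basis) such that $e_ie_j=0$ for $i\neq j$. $A^2$ is the span of $\{xy:x,y\in A\}$, $A^3$ the span of $\{xy:x\in A,y\in A^2\}$, $(A^2)^2$ the span of $\{xy:x,y\in A^2\}$. For a natural basis $\{e_1,e_2\}$ with $e_1^2=\omega_{11}e_1+\omega_{21}e_2$, $e_2^2=\omega_{12}e_1+\omega_{22}e_2$, its pseudo-square is the subset of $\{L,T,R,D\}$ where $L,T,R,D$ are present iff $\omega_{11},\omega_{12},\omega_{22},\omega_{21}$ respectively are nonzero; the square of $A$ is the set of pseudo-squares of all natural bases; $\mathfrak{D}_7=\{\{L\},\{R\}\}$, $\mathfrak{D}_9=\{\{L,D\},\{T,R\}\}$. *)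

From HB Require Import structures.
From mathcomp Require Import all_boot all_order all_algebra.
Set Implicit Arguments. Unset Strict Implicit. Unset Printing Implicit Defensive.
Import GRing.Theory.
Local Open Scope ring_scope.

Inductive letter := sqL | sqT | sqR | sqD.

Definition letter_to (x : letter) : 'I_4 :=
  match x with sqL => inord 0 | sqT => inord 1 | sqR => inord 2 | sqD => inord 3 end.
Definition letter_of (i : 'I_4) : letter :=
  match val i with 0 => sqL | 1 => sqT | 2 => sqR | _ => sqD end%N.
Lemma letter_toK : cancel letter_to letter_of.
Proof. by case; rewrite /letter_of /= inordK. Qed.
HB.instance Definition _ := Finite.copy letter (can_type letter_toK).

(* A two-dimensional K-algebra, with carrier K^2 = 'rV[K]_2, given by its
   structure constants c i j = eps_i * eps_j (eps = standard basis). Every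
   bilinear product on K^2 arises this way. *)
Definition alg2 (K : fieldType) := 'I_2 -> 'I_2 -> 'rV[K]_2.

Definition amul (K : fieldType) (c : alg2 K) (x y : 'rV[K]_2) : 'rV[K]_2 :=
  \sum_(i < 2) \sum_(j < 2) (x 0 i * y 0 j) *: c i j.

Definition natural_basis (K : fieldType) (c : alg2 K) (e1 e2 : 'rV[K]_2) : Prop :=
  row_free (col_mx e1 e2) /\ amul c e1 e2 = 0 /\ amul c e2 e1 = 0.

Definition is_evolution (K : fieldType) (c : alg2 K) : Prop :=
  exists e1 e2, natural_basis c e1 e2.

Definition in_span (K : fieldType) (S : 'rV[K]_2 -> Prop) (v : 'rV[K]_2) : Prop :=
  exists (n : nat) (a : 'I_n -> K) (w : 'I_n -> 'rV[K]_2),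
    (forall i, S (w i)) /\ v = \sum_(i < n) a i *: w i.

Definition A2 (K : fieldType) (c : alg2 K) : 'rV[K]_2 -> Prop :=
  in_span (fun w => exists x y, w = amul c x y).
Definition A3 (K : fieldType) (c : alg2 K) : 'rV[K]_2 -> Prop :=
  in_span (fun w => exists x y, A2 c y /\ w = amul c x y).
Definition A2sq (K : fieldType) (c : alg2 K) : 'rV[K]_2 -> Prop :=
  in_span (fun w => exists x y, A2 c x /\ A2 c y /\ w = amul c x y).

Definition nonzero_space (K : fieldType) (S : 'rV[K]_2 -> Prop) : Prop :=
  exists v, S v /\ v <> 0.

Definition Ann (K : fieldType) (c : alg2 K) (a : 'rV[K]_2) : Prop :=
  forall x, amul c a x = 0.

Definition alg_iso (K : fieldType) (c1 c2 : alg2 K) : Prop :=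
  exists f : 'M[K]_2, f \in unitmx /\
    forall x y, amul c2 (x *m f) (y *m f) = amul c1 x y *m f.

Definition pseudo_square (K : fieldType) (c : alg2 K) (e1 e2 : 'rV[K]_2)
    (P : {set letter}) : Prop :=
  exists w11 w21 w12 w22 : K,
    amul c e1 e1 = w11 *: e1 + w21 *: e2 /\
    amul c e2 e2 = w12 *: e1 + w22 *: e2 /\
    P = [set l | match l with
                 | sqL => w11 != 0 | sqT => w12 != 0
                 | sqR => w22 != 0 | sqD => w21 != 0 end].

Definition square (K : fieldType) (c : alg2 K) (P : {set letter}) : Prop :=
  exists e1 e2, natural_basis c e1 e2 /\ pseudo_square c e1 e2 P.

Definition D7 : {set {set letter}} := [set [set sqL]; [set sqR]].
Definition D9 : {set {set letter}} := [set [set sqL; sqD]; [set sqT; sqR]].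

Definition cor_hyp (K : fieldType) (c : alg2 K) : Prop :=
  [/\ is_evolution c, nonzero_space (A3 c), nonzero_space (A2sq c)
    & nonzero_space (Ann c)].

From mathcomp Require Import all_boot all_order all_algebra.
From mathcomp Require Import ring.

(* An element a e1 + b e2 of the annihilator kills e1^2 and e2^2 up to the
   factors a and b, so one vector of a natural basis, say e2, squares to 0.
   Then A^2 is the line spanned by e1^2 = p e1 + q e2, and A^3 <> 0 forces
   p <> 0; hence u = p^-1 e1 + q p^-2 e2 satisfies u^2 = u, and (u, e2) is a
   natural basis with u^2 = u, e2^2 = 0.  Any two such algebras are isomorphic,
   and in the coordinates (u, v = e2) the natural bases are exactly the pairs
   (a u + b v, b' v) with a b' <> 0 and (b v, a' u + b' v) with a' b <> 0;
   their pseudo-squares are {L} or {L, D}, resp. {R} or {T, R}. *)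

Set Implicit Arguments. Unset Strict Implicit. Unset Printing Implicit Defensive.
Import GRing.Theory.
Local Open Scope ring_scope.

Lemma letter_eqF (x y : letter) : x <> y -> (x == y) = false.
Proof. by move/eqP/negbTE. Qed.

Section TwoDimensional.

Variable K : fieldType.
Implicit Types (c : alg2 K) (u v x y z : 'rV[K]_2) (a b : K).

Lemma col_mx2E u v i j : col_mx u v i j = if i == 0 then u 0 j else v 0 j.
Proof.
by rewrite mxE; case: splitP => k; rewrite (ord1 k) -(inj_eq val_inj) => /= ->.
Qed.

Lemma det_mx22 (A : 'M[K]_2) : \det A = A 0 0 * A 1 1 - A 0 1 * A 1 0.
Proof.
rewrite (expand_det_row _ 0) !big_ord_recl big_ord0 /cofactor !det_mx11 !mxE /=.
have -> : lift 0 (0 : 'I_1) = 1 :> 'I_2 by apply/val_inj.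
have -> : lift 1 (0 : 'I_1) = 0 :> 'I_2 by apply/val_inj.
by rewrite !expr0 !expr1 !mul1r addr0 mulN1r mulrN.
Qed.

Lemma row_free_col_mx2 u v :
  row_free (col_mx u v) = (u 0 0 * v 0 1 - u 0 1 * v 0 0 != 0).
Proof. by rewrite row_free_unit unitmxE unitfE det_mx22 !col_mx2E. Qed.

Lemma row_free_col_mx2C u v : row_free (col_mx u v) = row_free (col_mx v u).
Proof.
by rewrite !row_free_col_mx2 -oppr_eq0 opprB [u 0 0 * _]mulrC [u 0 1 * _]mulrC.
Qed.

Lemma row_free_col_mx2_neq0 u v : row_free (col_mx u v) -> u != 0.
Proof.
by rewrite row_free_col_mx2; apply: contraNneq => ->; rewrite !mxE !mul0r subrr.
Qed.

Lemma row_free_lincomb2 u v a b a' b' :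
  row_free (col_mx (a *: u + b *: v) (a' *: u + b' *: v)) =
  (a * b' - b * a' != 0) && row_free (col_mx u v).
Proof.
rewrite !row_free_col_mx2 -negb_or -mulf_eq0 !mxE.
by congr (_ != 0); ring.
Qed.

Lemma mul_col_mx2 x u v : x *m col_mx u v = x 0 0 *: u + x 0 1 *: v.
Proof.
apply/rowP => j; rewrite !mxE !big_ord_recl big_ord0 !col_mx2E /= addr0.
by have -> : lift ord0 ord0 = 1 :> 'I_2 by apply/val_inj.
Qed.

Lemma row_free_coord u v x : row_free (col_mx u v) ->
  exists a b, x = a *: u + b *: v.
Proof.
rewrite row_free_unit => uv_unit.
set y := x *m invmx (col_mx u v).
by exists (y 0 0), (y 0 1); rewrite -mul_col_mx2 mulmxKV.
Qed.

Lemma row_free_coord_inj u v a b a' b' : row_free (col_mx u v) ->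
  a *: u + b *: v = a' *: u + b' *: v -> a = a' /\ b = b'.
Proof.
have lincomb a1 b1 : a1 *: u + b1 *: v = row_mx a1%:M b1%:M *m col_mx u v.
  by rewrite mul_row_col !mul_scalar_mx.
move=> free; rewrite !lincomb => /(row_free_inj free)/eq_row_mx.
by case=> /matrixP/(_ 0 0) + /matrixP/(_ 0 0); rewrite !mxE !mulr1n.
Qed.

Lemma amulDl c x y z : amul c (x + y) z = amul c x z + amul c y z.
Proof.
rewrite /amul -big_split; apply: eq_bigr => i _; rewrite -big_split.
by apply: eq_bigr => j _; rewrite !mxE mulrDl scalerDl.
Qed.

Lemma amulDr c x y z : amul c z (x + y) = amul c z x + amul c z y.
Proof.
rewrite /amul -big_split; apply: eq_bigr => i _; rewrite -big_split.
by apply: eq_bigr => j _; rewrite !mxE mulrDr scalerDl.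
Qed.

Lemma amulZl c a x z : amul c (a *: x) z = a *: amul c x z.
Proof.
rewrite /amul scaler_sumr; apply: eq_bigr => i _; rewrite scaler_sumr.
by apply: eq_bigr => j _; rewrite !mxE scalerA mulrA.
Qed.

Lemma amulZr c a x z : amul c z (a *: x) = a *: amul c z x.
Proof.
rewrite /amul scaler_sumr; apply: eq_bigr => i _; rewrite scaler_sumr.
by apply: eq_bigr => j _; rewrite !mxE scalerA mulrCA.
Qed.

Lemma amul_lincomb_orth c u v a b a' b' :
  amul c u v = 0 -> amul c v u = 0 ->
  amul c (a *: u + b *: v) (a' *: u + b' *: v) =
  (a * a') *: amul c u u + (b * b') *: amul c v v.
Proof.
move=> uv0 vu0; rewrite !amulDl !amulDr !amulZl !amulZr uv0 vu0.
by rewrite !scaler0 addr0 add0r !scalerA.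
Qed.

Lemma in_span_gen (S : 'rV[K]_2 -> Prop) (w : 'rV[K]_2) : S w -> in_span S w.
Proof.
by move=> Sw; exists 1%N, (fun=> 1), (fun=> w); rewrite big_ord1 scale1r.
Qed.

Lemma in_span_line (S : 'rV[K]_2 -> Prop) (s w : 'rV[K]_2) :
  (forall x, S x -> exists t, x = t *: s) -> in_span S w -> exists t, w = t *: s.
Proof.
move=> Sline [n [a [x [Sx ->]]]].
have /fin_all_exists [t xt] : forall i, exists t, x i = t *: s.
  by move=> i; exact: Sline.
exists (\sum_i a i * t i); rewrite scaler_suml; apply: eq_bigr => i _.
by rewrite xt scalerA.
Qed.

Lemma natural_basisC c e1 e2 : natural_basis c e1 e2 -> natural_basis c e2 e1.
Proof. by case=> free [e12 e21]; rewrite /natural_basis row_free_col_mx2C. Qed.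

Definition idem_nil_basis c u v :=
  [/\ natural_basis c u v, amul c u u = u & amul c v v = 0].

Lemma natural_basis_nil_of_Ann c :
  is_evolution c -> nonzero_space (Ann c) ->
  exists e1 e2, natural_basis c e1 e2 /\ amul c e2 e2 = 0.
Proof.
move=> [e1 [e2 nb]] [w [Annw w_neq0]]; have [free [e12 e21]] := nb.
have [a [b def_w]] := row_free_coord w free.
have w_e1 : amul c w e1 = a *: amul c e1 e1.
  by rewrite def_w amulDl !amulZl e21 scaler0 addr0.
have w_e2 : amul c w e2 = b *: amul c e2 e2.
  by rewrite def_w amulDl !amulZl e12 scaler0 add0r.
have [b0 | b_neq0] := eqVneq b 0.
  have a_neq0 : a != 0.
    by apply: contra_notN w_neq0 => /eqP a0; rewrite def_w a0 b0 !scale0r addr0.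
  exists e2, e1; split; first exact: natural_basisC.
  by move/eqP: (Annw e1); rewrite w_e1 scaler_eq0 (negbTE a_neq0) => /eqP.
exists e1, e2; split => //.
by move/eqP: (Annw e2); rewrite w_e2 scaler_eq0 (negbTE b_neq0) => /eqP.
Qed.

Lemma idem_nil_basis_of_A3 c e1 e2 :
  natural_basis c e1 e2 -> amul c e2 e2 = 0 -> nonzero_space (A3 c) ->
  exists u v, idem_nil_basis c u v.
Proof.
move=> [free [e12 e21]] e22 [w [A3w w_neq0]].
have mulE a b a' b' :
    amul c (a *: e1 + b *: e2) (a' *: e1 + b' *: e2) = (a * a') *: amul c e1 e1.
  by rewrite amul_lincomb_orth // e22 scaler0 addr0.
have A2_line y : A2 c y -> exists t, y = t *: amul c e1 e1.
  apply: in_span_line => _ [x [x' ->]].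
  have [a [b ->]] := row_free_coord x free; have [a' [b' ->]] := row_free_coord x' free.
  by exists (a * a'); rewrite mulE.
have [p [q e11]] := row_free_coord (amul c e1 e1) free.
have p_neq0 : p != 0.
  apply: contra_notN w_neq0 => /eqP p0.
  suff [t ->] : exists t, w = t *: (0 : 'rV[K]_2) by rewrite scaler0.
  apply: in_span_line A3w => _ [x [y [/A2_line [t ->] ->]]].
  have [a [b ->]] := row_free_coord x free.
  by exists 0; rewrite e11 p0 scalerDr !scalerA mulE !mulr0 !scale0r.
exists (p^-1 *: e1 + (q / p ^+ 2) *: e2), (0 *: e1 + 1 *: e2).
split; [split; [|split]|..].
- by rewrite row_free_lincomb2 free mulr1 mulr0 subr0 invr_eq0 p_neq0.
- by rewrite mulE mulr0 scale0r.
- by rewrite mulE mul0r scale0r.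
- by rewrite mulE e11; apply/rowP => j; rewrite !mxE; field.
- by rewrite mulE mul0r scale0r.
Qed.

Lemma idem_nil_basis_of_cor_hyp c : cor_hyp c -> exists u v, idem_nil_basis c u v.
Proof.
case=> evo A3_neq0 _ /(natural_basis_nil_of_Ann evo) [e1 [e2 [nb e22]]].
exact: idem_nil_basis_of_A3 nb e22 A3_neq0.
Qed.

Definition pseudo_square_set (w11 w21 w12 w22 : K) : {set letter} :=
  [set l | match l with
           | sqL => w11 != 0 | sqT => w12 != 0
           | sqR => w22 != 0 | sqD => w21 != 0 end].

Lemma pseudo_squareE c e1 e2 w11 w21 w12 w22 P :
  row_free (col_mx e1 e2) ->
  amul c e1 e1 = w11 *: e1 + w21 *: e2 -> amul c e2 e2 = w12 *: e1 + w22 *: e2 ->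
  pseudo_square c e1 e2 P <-> P = pseudo_square_set w11 w21 w12 w22.
Proof.
move=> free e11 e22; split => [[w11' [w21' [w12' [w22' [e11' [e22' ->]]]]]] | ->].
  rewrite e11 in e11'; rewrite e22 in e22'.
  have [<- <-] := row_free_coord_inj free e11'.
  by have [<- <-] := row_free_coord_inj free e22'.
by exists w11, w21, w12, w22.
Qed.

Lemma pseudo_square_set_lower w11 w21 : w11 != 0 ->
  pseudo_square_set w11 w21 0 0 = if w21 == 0 then [set sqL] else [set sqL; sqD].
Proof.
move=> w11_neq0; apply/setP; case: eqP => [->|/eqP w21_neq0];
  by case; rewrite !inE ?eqxx ?letter_eqF ?w11_neq0 ?w21_neq0.
Qed.

Lemma pseudo_square_set_upper w12 w22 : w22 != 0 ->
  pseudo_square_set 0 0 w12 w22 = if w12 == 0 then [set sqR] else [set sqT; sqR].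
Proof.
move=> w22_neq0; apply/setP; case: eqP => [->|/eqP w12_neq0];
  by case; rewrite !inE ?eqxx ?letter_eqF ?w22_neq0 ?w12_neq0.
Qed.

Section IdemNilBasis.

Variables (c : alg2 K) (u v : 'rV[K]_2).
Hypothesis uv : idem_nil_basis c u v.

Lemma idem_nil_mul a b a' b' :
  amul c (a *: u + b *: v) (a' *: u + b' *: v) = (a * a') *: u.
Proof.
have [[_ [uv0 vu0]] uu vv] := uv.
by rewrite amul_lincomb_orth // uu vv scaler0 addr0.
Qed.

Lemma cor_hyp_of_idem_nil_basis : cor_hyp c.
Proof.
have [nb uu vv] := uv; have [free [_ vu0]] := nb.
have u_neq0 : u <> 0 by apply/eqP; exact: row_free_col_mx2_neq0 free.
have A2u : A2 c u by apply: in_span_gen; exists u, u.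
split.
- by exists u, v.
- by exists u; split=> //; apply: in_span_gen; exists u, u.
- by exists u; split=> //; apply: in_span_gen; exists u, u.
exists v; split; last first.
  by apply/eqP/(row_free_col_mx2_neq0 (v := u)); rewrite -row_free_col_mx2C.
move=> x; have [a [b ->]] := row_free_coord x free.
by rewrite amulDr !amulZr vu0 vv !scaler0 addr0.
Qed.

Lemma natural_basis_idem_nil e1 e2 : natural_basis c e1 e2 ->
  exists a b a' b', [/\ e1 = a *: u + b *: v, e2 = a' *: u + b' *: v,
                        a * b' - b * a' != 0 & a * a' = 0].
Proof.
have [[free _] _ _] := uv.
case=> free12 [e12 _].
have [a [b def_e1]] := row_free_coord e1 free.
have [a' [b' def_e2]] := row_free_coord e2 free.
move: free12 e12; rewrite def_e1 def_e2 row_free_lincomb2 idem_nil_mul.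
move=> /andP [det_neq0 _].
move/eqP; rewrite scaler_eq0 (negbTE (row_free_col_mx2_neq0 free)) orbF => /eqP aa'0.
by exists a, b, a', b'.
Qed.

Lemma natural_basis_idem_nil_comb a b a' b' :
  a * b' - b * a' != 0 -> a * a' = 0 ->
  natural_basis c (a *: u + b *: v) (a' *: u + b' *: v).
Proof.
have [[free _] _ _] := uv.
move=> det_neq0 aa'0; split; first by rewrite row_free_lincomb2 det_neq0.
by rewrite !idem_nil_mul aa'0 mulrC aa'0 scale0r.
Qed.

Lemma pseudo_square_lower a b b' P : a != 0 -> b' != 0 ->
  pseudo_square c (a *: u + b *: v) (0 *: u + b' *: v) P <->
  P = pseudo_square_set a (- (a * b / b')) 0 0.
Proof.
have [[free _] _ _] := uv.
move=> a_neq0 b'_neq0; apply: pseudo_squareE.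
- by rewrite row_free_lincomb2 free mulr0 subr0 mulf_neq0.
- by rewrite idem_nil_mul; apply/rowP => j; rewrite !mxE; field.
- by rewrite idem_nil_mul mul0r !scale0r addr0.
Qed.

Lemma pseudo_square_upper b a' b' P : a' != 0 -> b != 0 ->
  pseudo_square c (0 *: u + b *: v) (a' *: u + b' *: v) P <->
  P = pseudo_square_set 0 0 (- (a' * b' / b)) a'.
Proof.
have [[free _] _ _] := uv.
move=> a'_neq0 b_neq0; apply: pseudo_squareE.
- by rewrite row_free_lincomb2 free mul0r sub0r oppr_eq0 mulf_neq0.
- by rewrite idem_nil_mul mul0r !scale0r addr0.
- by rewrite idem_nil_mul; apply/rowP => j; rewrite !mxE; field.
Qed.

Lemma square_idem_nil P : square c P <-> P \in D7 :|: D9.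
Proof.
split.
  case=> e1 [e2 [/natural_basis_idem_nil [a [b [a' [b' [-> -> det_neq0 /eqP]]]]]]].
  rewrite mulf_eq0 => /orP [] /eqP coef0; move: det_neq0; rewrite coef0.
    rewrite mul0r sub0r oppr_eq0 mulf_eq0 negb_or => /andP [b_neq0 a'_neq0].
    move/(pseudo_square_upper _ _ a'_neq0 b_neq0) => ->.
    by rewrite pseudo_square_set_upper //; case: ifP; rewrite !inE eqxx ?orbT.
  rewrite mulr0 subr0 mulf_eq0 negb_or => /andP [a_neq0 b'_neq0].
  move/(pseudo_square_lower _ _ a_neq0 b'_neq0) => ->.
  by rewrite pseudo_square_set_lower //; case: ifP; rewrite !inE eqxx ?orbT.
have lower b : square c (pseudo_square_set 1 (- (1 * b / 1)) 0 0).
  exists (1 *: u + b *: v), (0 *: u + 1 *: v); split.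
    by apply: natural_basis_idem_nil_comb; rewrite ?mulr0 // mulr1 subr0 oner_eq0.
  by apply/pseudo_square_lower; rewrite ?oner_eq0.
have upper b' : square c (pseudo_square_set 0 0 (- (1 * b' / 1)) 1).
  exists (0 *: u + 1 *: v), (1 *: u + b' *: v); split.
    apply: natural_basis_idem_nil_comb; rewrite ?mul0r //.
    by rewrite sub0r mulr1 oppr_eq0 oner_eq0.
  by apply/pseudo_square_upper; rewrite ?oner_eq0.
rewrite !inE => /orP [/orP [] | /orP []] /eqP ->.
- move: (lower 0); rewrite pseudo_square_set_lower ?oner_eq0 //.
  by rewrite mulr0 mul0r oppr0 eqxx.
- move: (upper 0); rewrite pseudo_square_set_upper ?oner_eq0 //.
  by rewrite mulr0 mul0r oppr0 eqxx.
- move: (lower 1); rewrite pseudo_square_set_lower ?oner_eq0 //.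
  by rewrite mul1r divr1 oppr_eq0 oner_eq0.
- move: (upper 1); rewrite pseudo_square_set_upper ?oner_eq0 //.
  by rewrite mul1r divr1 oppr_eq0 oner_eq0.
Qed.

End IdemNilBasis.

Lemma alg_iso_sym c1 c2 : alg_iso c1 c2 -> alg_iso c2 c1.
Proof.
case=> f [f_unit isof]; exists (invmx f); split; first by rewrite unitmx_inv.
move=> x y; apply: (canRL (mulmxK f_unit)).
by rewrite -isof !mulmxKV.
Qed.

Lemma alg_iso_trans c1 c2 c3 : alg_iso c1 c2 -> alg_iso c2 c3 -> alg_iso c1 c3.
Proof.
case=> f [f_unit isof] [g [g_unit isog]]; exists (f *m g); split.
  by rewrite unitmx_mul f_unit g_unit.
by move=> x y; rewrite !mulmxA isog isof.
Qed.

Definition idem_nil_alg : alg2 K :=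
  fun i j => if (i == 0) && (j == 0) then 'e_0 else 0.

Lemma amul_idem_nil_alg x y :
  amul idem_nil_alg x y = (x 0 0 * y 0 0) *: 'e_0.
Proof. by rewrite /amul !big_ord_recl !big_ord0 /idem_nil_alg /= !scaler0 !addr0. Qed.

Lemma idem_nil_basis_alg : idem_nil_basis idem_nil_alg ('e_0) ('e_1).
Proof.
split; [split; [|split]|..]; rewrite ?row_free_col_mx2 ?amul_idem_nil_alg !mxE /=;
  by rewrite ?mulr1 ?mulr0 ?mul0r ?subr0 ?oner_eq0 ?scale0r ?scale1r.
Qed.

Lemma alg_iso_idem_nil_alg c u v : idem_nil_basis c u v -> alg_iso idem_nil_alg c.
Proof.
move=> uv; have [[free _] _ _] := uv.
exists (col_mx u v); split; first by rewrite -row_free_unit.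
move=> x y; rewrite !mul_col_mx2 idem_nil_mul // amul_idem_nil_alg.
by rewrite !mxE /= mulr1 mulr0 scale0r addr0.
Qed.

End TwoDimensional.

Theorem corollary3p14 (K : fieldType) :
  (exists c : alg2 K, cor_hyp c) /\
  (forall c1 c2 : alg2 K, cor_hyp c1 -> cor_hyp c2 -> alg_iso c1 c2) /\
  (forall c : alg2 K, cor_hyp c ->
     forall P : {set letter}, square c P <-> P \in D7 :|: D9).
Proof.
split.
  by exists (idem_nil_alg K); exact: cor_hyp_of_idem_nil_basis (idem_nil_basis_alg K).
split=> [c1 c2 | c].
  move=> /idem_nil_basis_of_cor_hyp [u1 [v1 /alg_iso_idem_nil_alg iso1]].
  move=> /idem_nil_basis_of_cor_hyp [u2 [v2 /alg_iso_idem_nil_alg iso2]].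
  exact: alg_iso_trans (alg_iso_sym iso1) iso2.
by move=> /idem_nil_basis_of_cor_hyp [u [v uv]] P; apply: square_idem_nil uv P.
Qed.
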